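(* Let $X$ be a set of $n$ points with similarity function $S$, suppose the target clustering $\mathcal{C}^{\ast}=\{C^{\ast}_1,\dots,C^{\ast}_k\}$ satisfies stability with respect to $S$, let $\eta>0.5$, and suppose the initial clustering has clustering error $\gamma$, where $\gamma$ is any natural clustering error. Then in the $\eta$-merge model, the interactive algorithm using the global split procedure and the global $\eta$-merge procedure (described below) requires at most $O(\gamma+k)\log_{\frac{1}{1-\eta}} n$ edit requests to find the target clustering.
   Context: For nonempty $A,A'\subseteq X$, $S(A,A')$ is the average of $S(x,y)$ over $x\in A,y\in A'$. $\mathcal{C}^{\ast}$ satisfies stability w.r.t. $S$ if for all $i\neq j$, every nonempty proper $A\subset C^{\ast}_i$ and nonempty $A'\subseteq C^{\ast}_j$: $S(A,C^{\ast}_i\setminus A)>S(A,A')$. A natural clustering error is a function $\gamma$ assigning to each clustering $\mathcal{C}$ of $X$ a nonnegative integer $\gamma(\mathcal{C},\mathcal{C}^{\ast})$ such that for every clustering $\mathcal{C}$: (1) if a cluster $C_i\in\mathcal{C}$ contains points of $C^{\ast}_j$ and of some other target cluster, replacing $C_i$ by $C_i\cap C^{\ast}_j$ and $C_i\setminus C^{\ast}_j$ strictly decreases $\gamma$; (2) if two distinct clusters of $\mathcal{C}$ contain only points from the same target cluster, replacing them by their union strictly decreases $\gamma$. Average-linkage tree $T_{glob}$: leaves are singletons; repeatedly merge the two current nodes $N_1,N_2$ with largest $S(N_1,N_2)$ (ties arbitrary) into parent $N_1\cup N_2$ until the root $X$ remains. Process ($\eta$-merge model): start from the initial clustering, all clusters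 labelled ''impure''. The oracle issues split$(C_i)$ (only if $C_i$ has points from two or more target clusters) or merge$(C_i,C_j)$ (only if some $C^{\ast}_l$ has $|C_i\cap C^{\ast}_l|\ge\eta|C_i|$ and $|C_j\cap C^{\ast}_l|\ge\eta|C_j|$). Split procedure: with $N$ the deepest node of $T_{glob}$ containing $C_i$ and children $N_1,N_2$, replace $C_i$ by $C_i\cap N_1,C_i\cap N_2$, labelled ''impure''. Merge procedure: $\eta_1=1$ if $C_i$ is ''pure'', else $\eta$; $\eta_2$ likewise; find a maximal-depth node $N$ of $T_{glob}$ with $|N\cap C_i|\ge\eta_1|C_i|$, $|N\cap C_j|\ge\eta_2|C_j|$; replace $C_i,C_j$ by $C_i\setminus N$, $C_j\setminus N$ (labels kept, empty clusters discarded) and add new cluster $N\cap(C_i\cup C_j)$ labelled ''pure''. The bound is on the total number of requests before the current clustering equals $\mathcal{C}^{\ast}$, for any sequence of allowed requests; the $O(\cdot)$ hides an absolute constant. *)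

From HB Require Import structures.
From mathcomp Require Import all_boot all_order all_algebra.
From mathcomp Require Import reals exp.
Set Implicit Arguments. Unset Strict Implicit. Unset Printing Implicit Defensive.
Import Order.TTheory GRing.Theory Num.Theory.
Local Open Scope ring_scope.

Section Clustering.
Variables (R : realType) (T : finType).

Definition clustering (P : {set {set T}}) : bool := partition P [set: T].

Definition avgS (S : T -> T -> R) (A B : {set T}) : R :=
  (\sum_(x in A) \sum_(y in B) S x y) / (#|A| * #|B|)%:R.

Definition stable (S : T -> T -> R) (Cs : {set {set T}}) : Prop :=
  forall Ci Cj, Ci \in Cs -> Cj \in Cs -> Ci != Cj ->
  forall A A' : {set T}, A != set0 -> A \proper Ci -> A' != set0 -> A' \subset Cj ->
    avgS S A (Ci :\: A) > avgS S A A'.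

Definition natural_error (Cs : {set {set T}}) (gamma : {set {set T}} -> nat) : Prop :=
  (forall P Ci Cj, clustering P -> Ci \in P -> Cj \in Cs ->
     Ci :&: Cj != set0 -> ~~ (Ci \subset Cj) ->
     (gamma ((P :\ Ci) :|: [set Ci :&: Cj; Ci :\: Cj]) < gamma P)%N) /\
  (forall P C1 C2, clustering P -> C1 \in P -> C2 \in P -> C1 != C2 ->
     (exists2 Cl, Cl \in Cs & (C1 \subset Cl) && (C2 \subset Cl)) ->
     (gamma ((P :\ C1 :\ C2) :|: [set C1 :|: C2]) < gamma P)%N).

Definition merge_nodes (P : {set {set T}}) (N1 N2 : {set T}) : {set {set T}} :=
  (N1 :|: N2) |: ((P :\ N1) :\ N2).

(* al_run S P s : starting from the current nodes P, the merges listed in s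
   are performed by average linkage (each time a pair of distinct current
   nodes of maximum average similarity; ties arbitrary) until only the root
   X remains. *)
Inductive al_run (S : T -> T -> R) : {set {set T}} -> seq ({set T} * {set T}) -> Prop :=
| al_done (P : {set {set T}}) : P = [set [set: T]] -> al_run S P [::]
| al_step (P : {set {set T}}) (N1 N2 : {set T}) (s : seq ({set T} * {set T})) :
    N1 \in P -> N2 \in P -> N1 != N2 ->
    (forall M1 M2, M1 \in P -> M2 \in P -> M1 != M2 -> avgS S M1 M2 <= avgS S N1 N2) ->
    al_run S (merge_nodes P N1 N2) s -> al_run S P ((N1, N2) :: s).

Definition singletons : {set {set T}} := [set [set x] | x : T].

Definition avg_linkage_tree (S : T -> T -> R) (s : seq ({set T} * {set T})) : Prop :=
  al_run S singletons s.

Definition tnodes (s : seq ({set T} * {set T})) : {set {set T}} :=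
  singletons :|: [set p.1 :|: p.2 | p in [set p | p \in s]].

(* depth of a node = number of its strict ancestors (strict supersets among
   the nodes of the hierarchical tree) *)
Definition tdepth (s : seq ({set T} * {set T})) (N : {set T}) : nat :=
  #|[set M in tnodes s | N \proper M]|.

Inductive request := Split of {set T} | Merge of {set T} & {set T}.

(* state: current clustering and the set of clusters labelled "pure"
   (all others are labelled "impure") *)
Definition state := ({set {set T}} * {set {set T}})%type.

Definition impure_wrt (Cs : {set {set T}}) (C : {set T}) : bool :=
  (1 < #|[set D in Cs | D :&: C != set0]|)%N.

Definition allowed (eta : R) (Cs : {set {set T}}) (st : state) (r : request) : Prop :=
  match r with
  | Split C => C \in st.1 /\ impure_wrt Cs C
  | Merge Ci Cj => [/\ Ci \in st.1, Cj \in st.1, Ci != Cj &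
      (exists2 Cl, Cl \in Cs &
        (eta * #|Ci|%:R <= #|Ci :&: Cl|%:R) /\ (eta * #|Cj|%:R <= #|Cj :&: Cl|%:R))]
  end.

Definition eta_of (eta : R) (st : state) (C : {set T}) : R :=
  if C \in st.2 then 1 else eta.

Definition step (s : seq ({set T} * {set T})) (eta : R)
    (st : state) (r : request) (st' : state) : Prop :=
  match r with
  | Split C =>
      exists N N1 N2,
        [/\ N \in tnodes s, C \subset N,
            (forall M, M \in tnodes s -> C \subset M -> (tdepth s M <= tdepth s N)%N),
            ((N1, N2) \in s /\ N1 :|: N2 = N) &
            st' = ((st.1 :\ C) :|: [set C :&: N1; C :&: N2],
                   (st.2 :\ C) :\: [set C :&: N1; C :&: N2])]
  | Merge Ci Cj =>
      let e1 := eta_of eta st Ci in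
      let e2 := eta_of eta st Cj in
      let good N := (e1 * #|Ci|%:R <= #|N :&: Ci|%:R) /\ (e2 * #|Cj|%:R <= #|N :&: Cj|%:R) in
      exists N,
        [/\ N \in tnodes s, good N,
            (forall M, M \in tnodes s -> good M -> (tdepth s M <= tdepth s N)%N) &
            (let newC := N :&: (Ci :|: Cj) in
            let P' := ((st.1 :\ Ci :\ Cj) :|: ([set Ci :\: N; Cj :\: N] :\ set0))
                        :|: [set newC] in
            let Pu' := P' :&: ((st.2 :\ Ci :\ Cj)
                        :|: (if Ci \in st.2 then [set Ci :\: N] else set0)
                        :|: (if Cj \in st.2 then [set Cj :\: N] else set0)
                        :|: [set newC]) in
            st' = (P', Pu'))]
  end.

Fixpoint valid_run (s : seq ({set T} * {set T})) (eta : R) (Cs : {set {set T}})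
    (st : state) (rs : seq (request * state)) : Prop :=
  match rs with
  | [::] => True
  | (r, st') :: rs' =>
      [/\ st.1 != Cs, allowed eta Cs st r, step s eta st r st' &
          valid_run s eta Cs st' rs']
  end.

End Clustering.

From Pilot Require Import Defs.
From HB Require Import structures.
From mathcomp Require Import all_boot all_order all_algebra.
From mathcomp Require Import reals exp.
From mathcomp Require Import zify lra.
Import Order.TTheory GRing.Theory Num.Theory.
Local Open Scope ring_scope.
Set Implicit Arguments. Unset Strict Implicit. Unset Printing Implicit Defensive.

(* Stability makes every node of the average-linkage tree laminar with respect to the target:
   a merge of two laminar nodes producing a non-laminar one would pair a node [N1] strictly
   inside a target [D] with a node outside [D], although stability and averaging over the
   current nodes exhibit a node inside [D] more similar to [N1].  Hence every target is a node,
   the deepest node above an impure cluster splits it into two nonempty parts whose numbers of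
   targets add up, and the node chosen by an eta-merge lies inside the common target.
   With [L = log_{1/(1-eta)} n], charge a cluster 1 if it is labelled pure and
   [1 + log_{1/(1-eta)} |C|] otherwise, plus [3 + 2 L] for each target it meets beyond the
   first.  Every request lowers this potential by at least one: a split trades a target for two
   size charges, while a merge creates a pure cluster of charge 1 and leaves from each unlabelled
   cluster at most a [1 - eta] fraction, whose size charge is one less.  The initial potential is
   at most [3 (1 + L) sum_C (2 t_C - 1)], and this sum is at most [gamma + k] since splitting a
   cluster along a target, or merging two clusters of one target, lowers a natural error. *)

Section SumsOverBlocks.
Variables (V : nmodType) (T : finType).

Lemma sum_over_blocks (f : T -> V) (B : {set T}) (Q : {set {set T}}) :
  trivIset Q -> B \subset cover Q ->
  \sum_(y in B) f y = \sum_(M in Q) \sum_(y in M :&: B) f y.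
Proof.
move=> tQ sB.
have -> : \sum_(y in B) f y = \sum_(y in cover Q) (if y \in B then f y else 0).
  rewrite -big_mkcondr /=; apply: eq_bigl => y.
  by case yB: (y \in B); rewrite ?andbF ?andbT // (subsetP sB).
rewrite (big_trivIset _ tQ) /=; apply: eq_bigr => M _.
by rewrite -big_mkcondr /=; apply: eq_bigl => y; rewrite inE.
Qed.

Lemma sum_setU_setD (f : T -> V) (A B : {set T}) :
  \sum_(x in A :|: B) f x = \sum_(x in A :\: B) f x + \sum_(x in B) f x.
Proof. by rewrite (big_setID B) /= (setIidPr (subsetUr A B)) setDUl setDv setU0 addrC. Qed.

End SumsOverBlocks.

Section NonnegSums.
Variables (R : numDomainType) (T : finType) (f : T -> R).
Hypothesis f_ge0 : forall x, 0 <= f x.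
Implicit Types A B : {set T}.

Lemma sum_subset_le A B : A \subset B -> \sum_(x in A) f x <= \sum_(x in B) f x.
Proof.
move=> AB; rewrite [X in _ <= X](big_setID A) /= (setIidPr AB).
by rewrite lerDl sumr_ge0.
Qed.

Lemma sum_setU_le A B : \sum_(x in A :|: B) f x <= \sum_(x in A) f x + \sum_(x in B) f x.
Proof.
by rewrite sum_setU_setD lerD2r sum_subset_le ?subsetDl.
Qed.

Lemma sum_set2_le u v : \sum_(x in [set u; v]) f x <= f u + f v.
Proof. by apply: le_trans (sum_setU_le _ _) _; rewrite !big_set1. Qed.

Lemma sum_set2D1_le u v z :
  \sum_(x in [set u; v] :\ z) f x <=
  (if u == z then 0 else f u) + (if v == z then 0 else f v).
Proof.
have single w : \sum_(x in [set w] :\ z) f x = if w == z then 0 else f w.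
  case: eqP => [->|/eqP wz]; first by rewrite setDv big_set0.
  by rewrite (setDidPl _) ?big_set1 // disjoint_sym disjoints1 inE eq_sym.
by rewrite setDUl; apply: le_trans (sum_setU_le _ _) _; rewrite !single.
Qed.

End NonnegSums.

Section AverageSimilarity.
Variables (R : realType) (T : finType) (S : T -> T -> R).
Implicit Types A B : {set T}.

Definition simsum A B : R := \sum_(x in A) \sum_(y in B) S x y.

Lemma simsum0 A : simsum A set0 = 0.
Proof. by apply: big1 => x _; rewrite big_set0. Qed.

Lemma simsum_over_blocks A B (Q : {set {set T}}) :
  trivIset Q -> B \subset cover Q -> simsum A B = \sum_(M in Q) simsum A (M :&: B).
Proof.
move=> tQ sB; rewrite /simsum.
under eq_bigr => x _ do rewrite (sum_over_blocks _ tQ sB).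
by rewrite exchange_big.
Qed.

Lemma card_over_blocks B (Q : {set {set T}}) :
  trivIset Q -> B \subset cover Q -> (#|B|%:R : R) = \sum_(M in Q) #|M :&: B|%:R.
Proof.
move=> tQ sB; rewrite -sumr_const (sum_over_blocks _ tQ sB).
by apply: eq_bigr => M _; rewrite sumr_const.
Qed.

Lemma avgS_ltE A B v : A != set0 -> B != set0 ->
  (avgS S A B < v) = (simsum A B < v * (#|A| * #|B|)%:R).
Proof. by move=> A0 B0; rewrite /avgS ltr_pdivrMr // ltr0n muln_gt0 !card_gt0 A0 B0. Qed.

Lemma avgSC : (forall x y, S x y = S y x) -> forall A B, avgS S A B = avgS S B A.
Proof.
move=> Ssym A B; rewrite /avgS mulnC; congr (_ / _); rewrite exchange_big /=.
by apply: eq_bigr => x _; apply: eq_bigr => y _.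
Qed.

(* An average over [B] is a convex combination of the averages over the blocks of [B]. *)
Lemma avgS_lt_blocks A B (Q : {set {set T}}) v :
  trivIset Q -> B \subset cover Q -> A != set0 -> B != set0 ->
  (forall M, M \in Q -> M :&: B != set0 -> avgS S A (M :&: B) < v) ->
  avgS S A B < v.
Proof.
move=> tQ sB A0 B0 Hlt; rewrite avgS_ltE // (simsum_over_blocks _ tQ sB).
rewrite natrM (card_over_blocks tQ sB) !mulr_sumr.
have [y yB] := set0Pn _ B0.
have /bigcupP[M0 M0Q yM0] := subsetP sB y yB.
have M0B : M0 :&: B != set0 by apply/set0Pn; exists y; rewrite inE yM0.
rewrite (bigD1 M0) //= [X in _ < X](bigD1 M0) //=.
apply: ltr_leD; first by rewrite -natrM -avgS_ltE // Hlt.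
apply: ler_sum => M /andP[MQ _].
have [->|MB0] := eqVneq (M :&: B) set0; first by rewrite simsum0 cards0 !mulr0.
by rewrite -natrM ltW // -avgS_ltE // Hlt.
Qed.

Lemma avgS_le_block A B (Q : {set {set T}}) :
  trivIset Q -> B \subset cover Q -> A != set0 -> B != set0 ->
  exists2 M, M \in Q & (M :&: B != set0) && (avgS S A B <= avgS S A (M :&: B)).
Proof.
move=> tQ sB A0 B0; apply/exists_inP; apply: contraT => /exists_inPn Hno.
suff : avgS S A B < avgS S A B by rewrite ltxx.
apply: (avgS_lt_blocks (Q := Q)) => // M MQ MB; have := Hno M MQ.
by rewrite MB /= -ltNge.
Qed.

End AverageSimilarity.

Section Partitions.
Variable T : finType.
Implicit Types (A B C D M N : {set T}) (P : {set {set T}}).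

Lemma setI_neq0P A B : reflect (exists2 x, x \in A & x \in B) (A :&: B != set0).
Proof.
apply: (iffP (set0Pn _)) => [[x /setIP[]]|[x xA xB]]; first by exists x.
by exists x; rewrite inE xA.
Qed.

Lemma trivIset_disjoint P A B : trivIset P -> A \in P -> B \in P -> A != B ->
  A :&: B = set0.
Proof. by move=> /trivIsetP tP AP BP AB; apply/eqP; rewrite setI_eq0 tP. Qed.

Lemma trivIset_meet_eq P A B : trivIset P -> A \in P -> B \in P ->
  A :&: B != set0 -> A = B.
Proof.
move=> tP AP BP; apply: contraNeq => AB.
by rewrite (trivIset_disjoint tP AP BP AB).
Qed.

Lemma partition_coverP P D x : partition P D -> x \in D -> exists2 M, M \in P & x \in M.
Proof. by move/cover_partition <- => /bigcupP[M MP xM]; exists M. Qed.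

Lemma in_merge_nodes P N1 N2 M :
  (M \in merge_nodes P N1 N2) = (M == N1 :|: N2) || [&& M != N2, M != N1 & M \in P].
Proof. by rewrite !inE. Qed.

Lemma merge_nodes_partition P D N1 N2 : partition P D -> N1 \in P -> N2 \in P ->
  N1 != N2 -> partition (merge_nodes P N1 N2) D.
Proof.
move=> PD N1P N2P N12; have N2P1 : N2 \in P :\ N1 by rewrite !inE eq_sym N12.
have PD2 := partitionD1 (partitionD1 PD N1P) N2P1.
have N1D := partitionS PD N1P; have N2D := partitionS PD N2P.
have U0 : N1 :|: N2 != set0.
  by apply: contraNneq (partition_neq0 PD N1P) => U0; rewrite -subset0 -U0 subsetUl.
have Udisj : [disjoint N1 :|: N2 & D :\: N1 :\: N2].
  by rewrite -setI_eq0; apply/eqP/setP => x; rewrite !inE; case: (x \in N1); case: (x \in N2).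
suff {1}<- : N1 :|: N2 :|: D :\: N1 :\: N2 = D by apply: partitionU1.
apply/setP => x; rewrite !inE; have := subsetP N1D x; have := subsetP N2D x.
move=> h2 h1; case: (boolP (x \in N1)) => [/h1 -> //|_].
by case: (boolP (x \in N2)) => [/h2 -> //|_].
Qed.

Lemma split_partition P D C a b : partition P D -> C \in P ->
  a :|: b = C -> a :&: b = set0 -> a != set0 -> b != set0 ->
  partition ((P :\ C) :|: [set a; b]) D.
Proof.
move=> PD CP abC ab0 a0 b0.
have sub_out (X : {set T}) : X \subset C -> [disjoint X & D :\: C].
  move=> XC; rewrite -setI_eq0 -subset0; apply/subsetP => x.
  by rewrite !inE => /and3P[/(subsetP XC) ->].
have bC : b \subset C by rewrite -abC subsetUr.
have Pb := partitionU1 (partitionD1 PD CP) b0 (sub_out _ bC).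
have Pab : [disjoint a & b :|: D :\: C].
  by rewrite -setI_eq0 setIUr ab0 set0U setI_eq0 sub_out // -abC subsetUl.
have := partitionU1 Pb a0 Pab.
have -> : a |: (b |: (P :\ C)) = (P :\ C) :|: [set a; b].
  by apply/setP => X; rewrite !inE orbA orbC.
suff -> : a :|: (b :|: D :\: C) = D by [].
by rewrite setUA abC -{1}(setIidPr (partitionS PD CP)) setID.
Qed.

Lemma sub_block_notin P D C (a : {set T}) : partition P D -> C \in P -> a \subset C -> a != set0 ->
  a \notin P :\ C.
Proof.
move=> PD CP aC a0; rewrite in_setD1 negb_and negbK orbC.
case: (boolP (a \in P)) => //= aP; apply/eqP.
by apply: (trivIset_meet_eq (partition_trivIset PD)) => //; rewrite (setIidPl aC).
Qed.

Lemma singletons_partition : partition (singletons T) [set: T].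
Proof.
apply/and3P; split.
- apply/eqP/setP => x; rewrite inE; apply/bigcupP; exists [set x]; last by rewrite inE.
  exact: imset_f.
- apply/trivIsetP => _ _ /imsetP[x _ ->] /imsetP[y _ ->] xy.
  by rewrite disjoints1 inE; apply: contraNneq xy => ->.
- by apply/imsetP => -[x _ /setP /(_ x)]; rewrite !inE eqxx.
Qed.

End Partitions.

Definition laminar (T : finType) (Cs : {set {set T}}) (M : {set T}) :=
  forall D, D \in Cs -> [\/ M \subset D, D \subset M | M :&: D = set0].

Section AverageLinkageStep.
Variables (R : realType) (T : finType) (S : T -> T -> R) (Cs : {set {set T}}).
Hypothesis Ssym : forall x y, S x y = S y x.
Hypothesis Cspart : clustering Cs.
Hypothesis Cstab : stable S Cs.

Variable P : {set {set T}}.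
Hypothesis Ppart : partition P [set: T].
Hypothesis Plam : forall M, M \in P -> laminar Cs M.

Definition max_pair N1 N2 := [/\ N1 \in P, N2 \in P, N1 != N2 &
  forall M1 M2, M1 \in P -> M2 \in P -> M1 != M2 -> avgS S M1 M2 <= avgS S N1 N2].

Lemma max_pairC N1 N2 : max_pair N1 N2 -> max_pair N2 N1.
Proof.
case=> N1P N2P N12 Hmax; split; rewrite 1?eq_sym // => M1 M2 *.
by rewrite (avgSC Ssym N2); apply: Hmax.
Qed.

(* Stability makes [D :\: N1] more attractive to [N1] than anything outside [D];
   averaging over the blocks of [P] then yields a node inside [D] beating [N2]. *)
Lemma max_pair_meets_target N1 N2 D : max_pair N1 N2 ->
  D \in Cs -> N1 \proper D -> N2 :&: D != set0.
Proof.
case=> N1P N2P N12 N12max DCs N1D; apply/negP => /eqP N2D.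
have N10 := partition_neq0 Ppart N1P; have N20 := partition_neq0 Ppart N2P.
have tP := partition_trivIset Ppart; have tCs := partition_trivIset Cspart.
have coverT (Q : {set {set T}}) (B : {set T}) : partition Q [set: T] -> B \subset cover Q.
  by move/cover_partition ->; apply: subsetT.
set B := D :\: N1.
have B0 : B != set0.
  by have [_ [x xD xN1]] := properP N1D; apply/set0Pn; exists x; rewrite inE xD xN1.
have N1B : N1 :&: B = set0 by rewrite setIDA setDIl setDv set0I.
have N2_lt_B : avgS S N1 N2 < avgS S N1 B.
  apply: (avgS_lt_blocks (Q := Cs)) => // [|M MCs MN2]; first exact: coverT.
  have DM : D != M by apply: contraNneq MN2 => <-; rewrite setIC N2D.
  by apply: (Cstab DCs MCs DM) => //; rewrite ?subsetIl.
have [M MP /andP[MB B_le_M]] := avgS_le_block S tP (coverT _ B Ppart) N10 B0.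
have MN1 : M :&: N1 = set0.
  by apply: (trivIset_disjoint tP MP N1P); apply: contraNneq MB => ->; rewrite N1B.
have MD : M \subset D.
  have [//|DM|MD0] := Plam MP DCs.
    by move: N10; rewrite -subset0 -MN1 subsetI subxx (subset_trans (proper_sub N1D) DM).
  by move: MB; rewrite setIDA MD0 set0D eqxx.
have MBM : M :&: B = M.
  by apply/setIidPl; rewrite subsetD MD -setI_eq0 MN1 eqxx.
have M_le_N2 : avgS S N1 M <= avgS S N1 N2.
  by apply: N12max; rewrite // eq_sym; apply: contraNneq MB => ->; rewrite N1B.
rewrite MBM in B_le_M.
by move: (le_lt_trans (le_trans B_le_M M_le_N2) N2_lt_B); rewrite ltxx.
Qed.

Lemma merge_laminar N1 N2 : max_pair N1 N2 -> laminar Cs (N1 :|: N2).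
Proof.
move=> m12 D DCs; have m21 := max_pairC m12; have [N1P N2P _ _] := m12.
have inside N N' : max_pair N N' -> N \subset D -> laminar Cs N' ->
    [\/ N :|: N' \subset D, D \subset N :|: N' | (N :|: N') :&: D = set0].
  move=> mNN' ND /(_ D DCs) [N'D|DN'|N'D0]; first by apply: Or31; rewrite subUset ND.
    by apply: Or32; rewrite subsetU // DN' orbT.
  have [<-|ne] := eqVneq N D; first by apply: Or32; rewrite subsetUl.
  by have := max_pair_meets_target mNN' DCs; rewrite properEneq ne ND N'D0 eqxx; case/(_ isT).
case: (Plam N1P DCs) => [N1D|DN1|N1D0]; first exact: inside m12 N1D (Plam N2P).
  by apply: Or32; rewrite subsetU // DN1.
case: (Plam N2P DCs) => [N2D|DN2|N2D0].
- by rewrite setUC; apply: inside m21 N2D (Plam N1P).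
- by apply: Or32; rewrite subsetU // DN2 orbT.
- by apply: Or33; rewrite setIUl N1D0 N2D0 setU0.
Qed.

Lemma merge_nodes_laminar N1 N2 : max_pair N1 N2 ->
  forall M, M \in merge_nodes P N1 N2 -> laminar Cs M.
Proof.
move=> m12 M; rewrite in_merge_nodes => /orP[/eqP->|/and3P[_ _ /Plam//]].
exact: merge_laminar.
Qed.

Lemma proper_merge_target N1 N2 D : N1 \in P -> N2 \in P -> D \in Cs -> D \notin P ->
  (forall M, M \in P -> ~~ (D \proper M)) -> ~~ (D \proper N1 :|: N2).
Proof.
move=> N1P N2P DCs DP Dtop; have /set0Pn[x xD] := partition_neq0 Cspart DCs.
have meet_sub N : N \in P -> D :&: N != set0 -> N \subset D.
  move=> NP DN; have [//|DsN|N0] := Plam NP DCs; last by rewrite setIC N0 eqxx in DN.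
  move: (Dtop N NP); rewrite properEneq DsN andbT negbK => /eqP DeN.
  by rewrite DeN NP in DP.
have one_side N N' : N \in P -> D \subset N :|: N' -> D :&: N' = set0 -> False.
  move=> NP DNN' DN'0; have DN : D \subset N.
    apply/subsetP => y yD; have := subsetP DNN' y yD; rewrite inE => /orP[//|yN'].
    suff : y \in D :&: N' by rewrite DN'0 inE.
    by rewrite inE yD yN'.
  have ND : N \subset D.
    by apply: meet_sub NP _; apply/set0Pn; exists x; rewrite inE xD (subsetP DN).
  by move: DP; rewrite (_ : D = N) ?NP //; apply/eqP; rewrite eqEsubset DN ND.
apply/negP => DU; have DsU := proper_sub DU.
have [D1|D1] := eqVneq (D :&: N1) set0; first by apply: (one_side N2 N1); rewrite // setUC.
have [D2|D2] := eqVneq (D :&: N2) set0; first exact: (one_side N1 N2).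
by move: DU; rewrite properE subUset !meet_sub // andbF.
Qed.

End AverageLinkageStep.

Section AverageLinkageRun.
Variables (R : realType) (T : finType) (S : T -> T -> R) (Cs : {set {set T}}).
Hypothesis Ssym : forall x y, S x y = S y x.
Hypothesis Cspart : clustering Cs.
Hypothesis Cstab : stable S Cs.
Implicit Types (P : {set {set T}}) (s : seq ({set T} * {set T})).

Definition run_nodes P s : {set {set T}} :=
  P :|: [set p.1 :|: p.2 | p in [set p | p \in s]].

Lemma in_run_nodes P s M :
  (M \in run_nodes P s) = (M \in P) || has (fun p => M == p.1 :|: p.2) s.
Proof.
rewrite inE; congr orb; apply/imsetP/hasP => [[p]|[p ps /eqP->]]; last by exists p; rewrite ?inE.
by rewrite inE => ps ->; exists p.
Qed.

Lemma run_nodes_merge_sub P N1 N2 s :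
  run_nodes (merge_nodes P N1 N2) s \subset run_nodes P ((N1, N2) :: s).
Proof.
apply/subsetP => M; rewrite !in_run_nodes in_merge_nodes /=.
by case/orP=> [/orP[->|/and3P[_ _ ->]]|->]; rewrite ?orbT.
Qed.

Lemma run_nodes_cons_sub P N1 N2 s :
  run_nodes P ((N1, N2) :: s) \subset P :|: run_nodes (merge_nodes P N1 N2) s.
Proof.
apply/subsetP => M; rewrite in_setU !in_run_nodes /=.
by case/orP=> [->|/orP[eM|->]]; rewrite ?orbT // in_merge_nodes eM orbT.
Qed.

Lemma al_run_laminar P s : al_run S P s -> partition P [set: T] ->
  (forall M, M \in P -> laminar Cs M) -> forall M, M \in run_nodes P s -> laminar Cs M.
Proof.
elim=> {P s} [P -> _ Plam M|P N1 N2 s N1P N2P N12 Hmax _ IH Ppart Plam M].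
  by rewrite in_run_nodes orbF; apply: Plam.
have m12 : max_pair S P N1 N2 by [].
move/(subsetP (run_nodes_cons_sub P N1 N2 s)); rewrite inE => /orP[/Plam //|].
apply: IH; first exact: merge_nodes_partition.
exact: (merge_nodes_laminar Ssym Cspart Cstab Ppart Plam m12).
Qed.

Lemma al_run_pairs P s : al_run S P s -> partition P [set: T] -> forall p, p \in s ->
  [/\ p.1 \in run_nodes P s, p.2 \in run_nodes P s, p.1 != set0, p.2 != set0 &
      p.1 :&: p.2 = set0].
Proof.
elim=> {P s} [P _ _ p|P N1 N2 s N1P N2P N12 _ _ IH Ppart p]; first by rewrite in_nil.
rewrite in_cons => /orP[/eqP->|ps] /=.
  rewrite !in_run_nodes N1P N2P !(partition_neq0 Ppart) //.
  by split=> //; apply: trivIset_disjoint (partition_trivIset Ppart) N1P N2P N12.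
have [p1 p2 *] := IH (merge_nodes_partition Ppart N1P N2P N12) p ps.
by split=> //; apply: (subsetP (run_nodes_merge_sub P N1 N2 s)).
Qed.

Lemma al_run_targets P s : al_run S P s -> partition P [set: T] ->
  (forall M, M \in P -> laminar Cs M) -> forall D, D \in Cs ->
  (forall M, M \in P -> ~~ (D \proper M)) -> D \in run_nodes P s.
Proof.
elim=> {P s} [P -> _ _ D DCs Dtop|P N1 N2 s N1P N2P N12 Hmax _ IH Ppart Plam D DCs Dtop].
  by rewrite in_run_nodes !inE; have := Dtop _ (set11 setT); rewrite properT negbK orbF.
have [DP|DP] := boolP (D \in P); first by rewrite in_run_nodes DP.
have m12 : max_pair S P N1 N2 by [].
apply: (subsetP (run_nodes_merge_sub P N1 N2 s)); apply: IH => //.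
- exact: merge_nodes_partition.
- exact: (merge_nodes_laminar Ssym Cspart Cstab Ppart Plam m12).
move=> M; rewrite in_merge_nodes => /orP[/eqP->|/and3P[_ _ /Dtop//]].
exact: (proper_merge_target Cspart Plam N1P N2P DCs DP Dtop).
Qed.

End AverageLinkageRun.

Lemma singleton_laminar (T : finType) (Cs : {set {set T}}) M :
  M \in singletons T -> laminar Cs M.
Proof.
move=> /imsetP[x _ ->] D _; case xD: (x \in D); first by apply: Or31; rewrite sub1set.
by apply: Or33; apply/setP => z; rewrite !inE; apply/andP => -[/eqP-> ]; rewrite xD.
Qed.

Section AverageLinkageTree.
Variables (R : realType) (T : finType) (S : T -> T -> R) (Cs : {set {set T}}).
Hypothesis Ssym : forall x y, S x y = S y x.
Hypothesis Cspart : clustering Cs.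
Hypothesis Cstab : stable S Cs.
Variable s : seq ({set T} * {set T}).
Hypothesis Htree : avg_linkage_tree S s.

Lemma tnode_laminar M : M \in tnodes s -> laminar Cs M.
Proof.
exact: (al_run_laminar Ssym Cspart Cstab Htree (singletons_partition T) (@singleton_laminar _ _)).
Qed.

Lemma target_tnode D : D \in Cs -> D \in tnodes s.
Proof.
move=> DCs; apply: (al_run_targets Ssym Cspart Cstab Htree (singletons_partition T)) => //.
  exact: singleton_laminar.
move=> _ /imsetP[x _ ->]; rewrite properEneq subset1 negb_and negbK.
by rewrite (negbTE (partition_neq0 Cspart DCs)) orbF orbN.
Qed.

Lemma tree_pair p : p \in s -> [/\ p.1 \in tnodes s, p.2 \in tnodes s, p.1 != set0,
  p.2 != set0 & p.1 :&: p.2 = set0].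
Proof. exact: al_run_pairs Htree (singletons_partition T) p. Qed.

End AverageLinkageTree.

Lemma tdepth_proper (T : finType) (s : seq ({set T} * {set T})) (M N : {set T}) :
  N \in tnodes s -> M \proper N -> (tdepth s N < tdepth s M)%N.
Proof.
move=> Nt MN; apply: proper_card; apply/properP; split.
  by apply/subsetP => X; rewrite !inE => /andP[-> /(proper_trans MN)].
by exists N; rewrite inE ?Nt ?MN // properxx andbF.
Qed.

Section TargetCount.
Variables (T : finType) (Cs : {set {set T}}).
Hypothesis Cspart : clustering Cs.
Implicit Types (A B C D : {set T}).

Definition ntargets C := #|[set D in Cs | D :&: C != set0]|.

Definition pure C := exists2 D, D \in Cs & C \subset D.

Lemma ntargetsS A B : A \subset B -> (ntargets A <= ntargets B)%N.
Proof.
move=> AB; apply/subset_leq_card/subsetP => D; rewrite !inE => /andP[-> /setI_neq0P[x xD xA]].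
by apply/setI_neq0P; exists x; rewrite // (subsetP AB).
Qed.

Lemma ntargets_gt0 C : C != set0 -> (0 < ntargets C)%N.
Proof.
case/set0Pn => x xC; have [D DCs xD] := partition_coverP Cspart (in_setT x).
by rewrite card_gt0; apply/set0Pn; exists D; rewrite inE DCs; apply/setI_neq0P; exists x.
Qed.

Lemma pure_ntargets C : pure C -> (ntargets C <= 1)%N.
Proof.
case=> D0 D0Cs CD0; rewrite -(cards1 D0); apply/subset_leq_card/subsetP => D.
rewrite !inE => /andP[DCs /setI_neq0P[x xD xC]]; apply/eqP.
apply: (trivIset_meet_eq (partition_trivIset Cspart)) => //.
by apply/setI_neq0P; exists x; rewrite // (subsetP CD0).
Qed.

Lemma ntargets_pure C : C != set0 -> (ntargets C <= 1)%N -> pure C.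
Proof.
move=> C0 le1; have /card_gt0P[D] := ntargets_gt0 C0; rewrite inE => /andP[DCs DC].
exists D => //; apply/subsetP => x xC.
have [D' D'Cs xD'] := partition_coverP Cspart (in_setT x).
have [->//|DD'] := eqVneq D D'.
suff : (1 < ntargets C)%N by rewrite ltnNge le1.
apply: (@leq_trans #|[set D; D']|); first by rewrite cards2 DD'.
apply/subset_leq_card/subsetP => E /set2P[]->; rewrite inE ?DCs //.
by rewrite D'Cs; apply/setI_neq0P; exists x.
Qed.

Lemma pureS A B : A \subset B -> pure B -> pure A.
Proof. by move=> AB [D DCs BD]; exists D => //; apply: subset_trans BD. Qed.

Lemma ntargets_setD C D : D \in Cs -> (ntargets C <= (ntargets (C :\: D)).+1)%N.
Proof.
move=> DCs; rewrite -add1n -(cards1 D) (leq_trans _ (leq_card_setU _ _)) //.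
apply/subset_leq_card/subsetP => D'; rewrite !inE => /andP[D'Cs /setI_neq0P[x xD' xC]].
have [//|D'D] := eqVneq D' D; rewrite D'Cs; apply/setI_neq0P; exists x; rewrite // !inE xC andbT.
apply: contra D'D => xD; apply/eqP; apply: (trivIset_meet_eq (partition_trivIset Cspart)) => //.
by apply/setI_neq0P; exists x.
Qed.

End TargetCount.

Section NaturalErrorBound.
Variables (T : finType) (Cs : {set {set T}}) (gamma : {set {set T}} -> nat).
Hypothesis Cspart : clustering Cs.
Hypothesis gamma_natural : natural_error Cs gamma.
Implicit Types (C D : {set T}) (P : {set {set T}}).

Definition impurity C := (2 * ntargets Cs C - 1)%N.

Definition total_impurity P := (\sum_(C in P) impurity C)%N.

Lemma card_le_total_impurity P : clustering P -> (#|P| <= total_impurity P)%N.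
Proof.
move=> Pc; rewrite -sum1_card; apply: leq_sum => C CP.
by have := ntargets_gt0 Cspart (partition_neq0 Pc CP); rewrite /impurity; lia.
Qed.

Lemma total_impurity_pure P : (forall C, C \in P -> ntargets Cs C <= 1)%N ->
  (total_impurity P <= #|P|)%N.
Proof.
move=> Ppure; rewrite -sum1_card; apply: leq_sum => C /Ppure; rewrite /impurity; lia.
Qed.

Lemma total_impurity_split P C D : clustering P -> C \in P -> D \in Cs ->
  C :&: D != set0 -> C :\: D != set0 ->
  (total_impurity P <= (total_impurity ((P :\ C) :|: [set C :&: D; C :\: D])).+1)%N.
Proof.
move=> Pc CP DCs CD0 CmD0.
have ab : C :&: D != C :\: D.
  have /set0Pn[x xCD] := CD0; apply/eqP => /setP/(_ x); rewrite xCD.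
  by move: xCD; rewrite !inE => /andP[_ ->].
have -> : (P :\ C) :|: [set C :&: D; C :\: D] = C :&: D |: (C :\: D |: (P :\ C)).
  by apply/setP => X; rewrite !in_setU !in_set1 orbC -orbA.
have aP := sub_block_notin Pc CP (subsetIl C D) CD0.
have bP := sub_block_notin Pc CP (subsetDl C D) CmD0.
rewrite /total_impurity (big_setD1 C CP) !big_setU1 ?in_setU1 ?negb_or ?ab //=.
set rest := (\sum_(_ in P :\ C) _)%N; rewrite /impurity.
by have := ntargets_setD Cspart C DCs; have := ntargets_gt0 Cspart CD0; lia.
Qed.

Lemma total_impurity_merge P C1 C2 : clustering P -> C1 \in P -> C2 \in P -> C1 != C2 ->
  (forall C, C \in P -> ntargets Cs C <= 1)%N ->
  (total_impurity P <= (total_impurity ((P :\ C1 :\ C2) :|: [set C1 :|: C2])).+1)%N.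
Proof.
move=> Pc C1P C2P C12 Ppure.
have P'c : clustering ((P :\ C1 :\ C2) :|: [set C1 :|: C2]).
  by rewrite setUC; apply: merge_nodes_partition.
have := card_le_total_impurity P'c; have := total_impurity_pure Ppure.
suff -> : #|P| = #|(P :\ C1 :\ C2) :|: [set C1 :|: C2]|.+1 by lia.
have U_C1 : C1 :|: C2 \in P -> C1 :|: C2 = C1.
  move=> UP; apply: (trivIset_meet_eq (partition_trivIset Pc)) => //.
  by rewrite (setIidPr (subsetUl _ _)) (partition_neq0 Pc C1P).
rewrite setUC cardsU1; have -> : C1 :|: C2 \notin P :\ C1 :\ C2.
  by rewrite !inE; case: (boolP (C1 :|: C2 \in P)) => [/U_C1->|_]; rewrite ?eqxx !andbF.
by rewrite (cardsD1 C1 P) (cardsD1 C2 (P :\ C1)) C1P in_setD1 C2P eq_sym C12.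
Qed.

Lemma card_le_targets P : clustering P -> (forall C, C \in P -> pure Cs C) ->
  (forall C1 C2 D, C1 \in P -> C2 \in P -> D \in Cs -> C1 \subset D -> C2 \subset D -> C1 = C2) ->
  (#|P| <= #|Cs|)%N.
Proof.
move=> Pc Ppure Psep; pose f C := odflt set0 [pick D in Cs | C \subset D].
have fP C : C \in P -> f C \in Cs /\ C \subset f C.
  move=> CP; rewrite /f; case: pickP => [D /andP[]//|none].
  by have [D DCs CD] := Ppure C CP; move: (none D); rewrite DCs CD.
rewrite -(@card_in_imset _ _ f); last first.
  move=> C1 C2 C1P C2P fC12; have [fC1 C1f] := fP _ C1P; have [_ C2f] := fP _ C2P.
  by apply: Psep fC1 C1f _ => //; rewrite fC12.
by apply/subset_leq_card/subsetP => _ /imsetP[C CP ->]; case: (fP C CP).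
Qed.

Lemma total_impurity_le_error P : clustering P -> (total_impurity P <= gamma P + #|Cs|)%N.
Proof.
move: {2}(gamma P).+1 (ltnSn (gamma P)) => n; elim: n P => // n IH P lt_gn Pc.
have [gamma_split gamma_merge] := gamma_natural.
case: (boolP [exists C in P, 1 < ntargets Cs C]%N) => [/exists_inP[C CP Ct]|].
  have /card_gt0P[D] : (0 < ntargets Cs C)%N by apply: ltnW.
  rewrite inE => /andP[DCs DC]; rewrite setIC in DC.
  have CD : ~~ (C \subset D).
    by apply: contraTN Ct => CD; rewrite -leqNgt pure_ntargets //; exists D.
  have CmD0 : C :\: D != set0 by rewrite setD_eq0.
  have CDmD : (C :&: D) :&: (C :\: D) = set0.
    by apply/setP => x; rewrite !inE; case: (x \in D); rewrite ?andbF.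
  have := total_impurity_split Pc CP DCs DC CmD0.
  have lt_g := gamma_split P C D Pc CP DCs DC CD.
  have := IH _ (leq_trans lt_g lt_gn) (split_partition Pc CP (setID C D) CDmD DC CmD0).
  by move: lt_g; set P' := (P :\ C) :|: _; lia.
move=> /exists_inPn Ple1; have {}Ple1 C : C \in P -> (ntargets Cs C <= 1)%N.
  by move=> CP; rewrite leqNgt Ple1.
case: (boolP [exists C1 in P, exists C2 in P, (C1 != C2) &&
    [exists D in Cs, (C1 \subset D) && (C2 \subset D)]]).
  move=> /exists_inP[C1 C1P /exists_inP[C2 C2P /andP[C12 /exists_inP[D DCs /andP[C1D C2D]]]]].
  have C12D : exists2 Cl, Cl \in Cs & (C1 \subset Cl) && (C2 \subset Cl).
    by exists D; rewrite ?C1D.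
  have lt_g := gamma_merge P C1 C2 Pc C1P C2P C12 C12D.
  have P'c : clustering ((P :\ C1 :\ C2) :|: [set C1 :|: C2]).
    by rewrite setUC; apply: merge_nodes_partition.
  have := IH _ (leq_trans lt_g lt_gn) P'c; have := total_impurity_merge Pc C1P C2P C12 Ple1.
  by move: lt_g; set P' := (P :\ C1 :\ C2) :|: _; lia.
move=> /exists_inPn unmergeable; apply: leq_trans (total_impurity_pure Ple1) _.
apply: leq_trans (leq_addl _ _); apply: card_le_targets => // [C CP|C1 C2 D C1P C2P DCs C1D C2D].
  exact: ntargets_pure (partition_neq0 Pc CP) (Ple1 C CP).
apply/eqP; apply: contraT => C12; move/exists_inPn/(_ C2 C2P): (unmergeable C1 C1P).
by rewrite C12 /=; case/exists_inPn/(_ D DCs); rewrite C1D C2D.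
Qed.

End NaturalErrorBound.

Lemma fraction_meets (R : numDomainType) (T : finType) (e : R) (C N : {set T}) :
  0 < e -> C != set0 -> e * #|C|%:R <= #|N :&: C|%:R -> N :&: C != set0.
Proof.
move=> e_gt0 C0 NC; rewrite -card_gt0 -(ltr0n R); apply: lt_le_trans NC.
by rewrite mulr_gt0 ?ltr0n ?card_gt0.
Qed.

Section Majorities.
Variables (R : realType) (T : finType) (eta : R).
Hypothesis eta_gt : 1 / 2 < eta.

Lemma eta_gt0 : 0 < eta.
Proof. by move: eta_gt; lra. Qed.

Lemma majorities_meet (A B C : {set T}) : C != set0 ->
  eta * #|C|%:R <= #|A :&: C|%:R -> eta * #|C|%:R <= #|B :&: C|%:R -> A :&: B != set0.
Proof.
move=> C0 AC BC; have C_gt0 : (0 : R) < #|C|%:R by rewrite ltr0n card_gt0.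
have e_gt0 : 0 < 2 * eta - 1 by move: eta_gt; lra.
have : #|C|%:R < #|A :&: C|%:R + #|B :&: C|%:R :> R.
  by have := mulr_gt0 e_gt0 C_gt0; lra.
rewrite -natrD ltr_nat -(cardsUI (A :&: C)) => lt_C.
have : (#|A :&: C :|: B :&: C| <= #|C|)%N by apply/subset_leq_card; rewrite subUset !subsetIr.
move=> le_C; have : (0 < #|A :&: C :&: (B :&: C)|)%N by lia.
by rewrite card_gt0 setIACA; apply: contraNneq => ->; rewrite set0I.
Qed.

End Majorities.

Section Potential.
Variables (R : realType) (T : finType) (Cs : {set {set T}}) (eta : R).
Hypotheses (eta_gt : 1 / 2 < eta) (eta_lt : eta < 1).
Implicit Types (A C : {set T}) (st : state T).

Definition log_eta (x : R) := ln x / ln (1 / (1 - eta)).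

Definition log_size := log_eta #|T|%:R.

Definition size_cost C := 1 + log_eta #|C|%:R.

(* The weight of one extra target in a cluster pays for the two size costs a split creates. *)
Definition target_weight := 3 + 2 * log_size.

Definition cost st C :=
  (if C \in st.2 then 1 else size_cost C) + target_weight * (ntargets Cs C).-1%:R.

Definition potential st := \sum_(C in st.1) cost st C.

Definition consistent st := set0 \notin st.1 /\ forall C, C \in st.2 -> pure Cs C.

Lemma ln_base_gt0 : 0 < ln (1 / (1 - eta)).
Proof. by apply: ln_gt0; rewrite ltr_pdivlMr ?mul1r; move: eta_gt eta_lt; lra. Qed.

Lemma log_eta_le x y : 0 < x -> x <= y -> log_eta x <= log_eta y.
Proof.
move=> x_gt0 xy; rewrite /log_eta ler_pM2r ?invr_gt0 ?ln_base_gt0 // ler_ln ?posrE //.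
exact: lt_le_trans xy.
Qed.

Lemma log_eta_nat_ge0 n : 0 <= log_eta n%:R.
Proof.
apply: divr_ge0; last exact: ltW ln_base_gt0.
case: n => [|n]; first by rewrite ln0.
by apply: ln_ge0; rewrite ler1n.
Qed.

Lemma target_weight_ge0 : 0 <= target_weight.
Proof. by have := log_eta_nat_ge0 #|T|; rewrite /target_weight /log_size; lra. Qed.

Lemma size_cost_ge1 C : 1 <= size_cost C.
Proof. by rewrite lerDl log_eta_nat_ge0. Qed.

Lemma size_cost_le C : size_cost C <= 1 + log_size.
Proof.
rewrite lerD2l; case: (posnP #|C|) => [->|C0].
  by rewrite {1}/log_eta ln0 // mul0r log_eta_nat_ge0.
by apply: log_eta_le; rewrite ?ltr0n ?ler_nat ?max_card.
Qed.

Lemma size_cost_shrink A C : A != set0 ->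
  #|A|%:R <= (1 - eta) * #|C|%:R -> size_cost A <= size_cost C - 1.
Proof.
move=> A0 AC; have A_gt0 : (0 : R) < #|A|%:R by rewrite ltr0n card_gt0.
have e_gt0 : 0 < 1 - eta by move: eta_lt; lra.
have C_gt0 : (0 : R) < #|C|%:R.
  by rewrite -(pmulr_rgt0 _ e_gt0); apply: lt_le_trans AC.
have baseE : ln (1 - eta) = - ln (1 / (1 - eta)) by rewrite div1r lnV ?opprK // posrE.
have key : ln #|A|%:R <= ln (1 - eta) + ln #|C|%:R.
  by rewrite -lnM ?posrE // ler_ln ?posrE ?mulr_gt0.
suff : log_eta #|A|%:R <= log_eta #|C|%:R - 1 by rewrite /size_cost; lra.
have b_gt0 := ln_base_gt0; rewrite /log_eta; set b := ln (1 / (1 - eta)) in baseE b_gt0 *.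
rewrite ler_pdivrMr // mulrBl mul1r divfK ?gt_eqF //.
by move: key; rewrite baseE; lra.
Qed.

Lemma label_cost_le st C : (if C \in st.2 then 1 else size_cost C) <= size_cost C.
Proof. by case: ifP => // _; apply: size_cost_ge1. Qed.

Lemma cost_ge1 st C : 1 <= cost st C.
Proof.
rewrite -[1]addr0 lerD ?mulr_ge0 ?target_weight_ge0 //.
by case: ifP => _ //; apply: size_cost_ge1.
Qed.

Lemma cost_ge0 st C : 0 <= cost st C.
Proof. exact: le_trans ler01 (cost_ge1 st C). Qed.

Lemma cost_le st C : cost st C <= 1 + log_size + target_weight * (ntargets Cs C).-1%:R.
Proof. by rewrite lerD2r (le_trans (label_cost_le st C)) ?size_cost_le. Qed.

Lemma cost_unlabelled st C : C \notin st.2 ->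
  1 + target_weight * (ntargets Cs C).-1%:R <= cost st C.
Proof. by move=> /negbTE CPu; rewrite /cost CPu lerD2r size_cost_ge1. Qed.

Lemma cost_relabel st st' C : (C \in st.2 -> C \in st'.2) -> cost st' C <= cost st C.
Proof.
move=> lab; rewrite lerD2r; case: ifPn => [_|C'].
  by case: ifP => // _; apply: size_cost_ge1.
by rewrite ifF //; apply: contraNF C' => /lab.
Qed.

Lemma potential_le_replace st st' Old New :
  st'.1 \subset (st.1 :\: Old) :|: New ->
  (forall X, X \in st.1 :\: Old :\: New -> X \in st.2 -> X \in st'.2) ->
  potential st' <= \sum_(X in st.1 :\: Old) cost st X + \sum_(X in New) cost st' X.
Proof.
move=> sub lab; apply: le_trans (sum_subset_le (cost_ge0 st') sub) _.
rewrite sum_setU_setD lerD2r.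
apply: le_trans _ (sum_subset_le (cost_ge0 st) (subsetDl _ New)).
by apply: ler_sum => X XA; apply: cost_relabel; apply: lab.
Qed.

Lemma split_cost st st' C a b : C \notin st.2 ->
  (0 < ntargets Cs a)%N -> (0 < ntargets Cs b)%N ->
  (ntargets Cs a + ntargets Cs b <= ntargets Cs C)%N ->
  cost st' a + cost st' b <= cost st C - 1.
Proof.
move=> CPu ta tb tab.
have lt_t : ((ntargets Cs a).-1 + (ntargets Cs b).-1 < (ntargets Cs C).-1)%N by lia.
have := cost_unlabelled CPu; have := cost_le st' a; have := cost_le st' b.
have : (ntargets Cs a).-1%:R + (ntargets Cs b).-1%:R + 1 <= (ntargets Cs C).-1%:R :> R.
  by rewrite -natrD natr1 ler_nat.
move/(ler_wpM2l target_weight_ge0); rewrite /target_weight; lra.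
Qed.

Lemma eta_of_ge st C : eta <= eta_of eta st C.
Proof. by rewrite /eta_of; case: ifP => // _; apply: ltW. Qed.

Lemma eta_of_gt0 st C : 0 < eta_of eta st C.
Proof. exact: lt_le_trans (eta_gt0 eta_gt) (eta_of_ge st C). Qed.

Lemma merge_remainder_cost st st' C N :
  eta_of eta st C * #|C|%:R <= #|N :&: C|%:R ->
  (if C :\: N == set0 then 0 else cost st' (C :\: N)) <= cost st C - 1.
Proof.
move=> NC; case: eqP => [_|/eqP CN0]; first by rewrite subr_ge0 cost_ge1.
have CPu : C \notin st.2.
  apply: contra CN0 => CPu; move: NC; rewrite /eta_of CPu mul1r ler_nat => NC.
  have NCC : N :&: C = C by apply/eqP; rewrite eqEcard subsetIr NC.
  by rewrite setD_eq0 -NCC subsetIl.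
move: NC; rewrite /eta_of (negbTE CPu) => NC.
have : #|C :\: N|%:R <= (1 - eta) * #|C|%:R.
  by move: NC; rewrite -(cardsID N C) setIC natrD; lra.
move/(size_cost_shrink CN0); have := label_cost_le st' (C :\: N).
have : (ntargets Cs (C :\: N)).-1%:R <= (ntargets Cs C).-1%:R :> R.
  by rewrite ler_nat -!subn1 leq_sub2r // ntargetsS // subsetDl.
move/(ler_wpM2l target_weight_ge0); rewrite /cost (negbTE CPu); lra.
Qed.

End Potential.

Section EditRequests.
Variables (R : realType) (T : finType) (S : T -> T -> R) (Cs : {set {set T}}) (eta : R).
Variable s : seq ({set T} * {set T}).
Hypothesis Ssym : forall x y, S x y = S y x.
Hypothesis Cspart : clustering Cs.
Hypothesis Cstab : stable S Cs.
Hypothesis Htree : avg_linkage_tree S s.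
Hypotheses (eta_gt : 1 / 2 < eta) (eta_lt : eta < 1).
Implicit Types (C N : {set T}) (st : state T).

Lemma deepest_split_meets C N N1 N2 : N \in tnodes s -> C \subset N ->
  (forall M, M \in tnodes s -> C \subset M -> (tdepth s M <= tdepth s N)%N) ->
  (N1, N2) \in s -> N1 :|: N2 = N -> C :&: N1 != set0 /\ C :&: N2 != set0.
Proof.
move=> Nt CN deepest N12s N12; have [N1t N2t N10 N20 N1N2] := tree_pair Htree N12s.
have miss M M' : M \in tnodes s -> M' != set0 -> M :&: M' = set0 -> M :|: M' = N ->
    C :&: M' != set0.
  move=> Mt M'0 MM' MN; apply/negP => /eqP CM'0.
  have CM : C \subset M.
    apply/subsetP => x xC; have := subsetP CN x xC; rewrite -MN inE => /orP[//|xM'].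
    suff : x \in C :&: M' by rewrite CM'0 inE.
    by rewrite inE xC xM'.
  have := deepest M Mt CM; rewrite leqNgt (tdepth_proper Nt) // -MN properUl //.
  by apply: contraNN M'0 => M'M; rewrite -subset0 -MM' subsetI M'M subxx.
split; first by apply: (miss N2); rewrite // 1?setIC // setUC.
exact: (miss N1).
Qed.

(* A target meeting both parts would contain both children, making [C] pure. *)
Lemma ntargets_split C N1 N2 : (1 < ntargets Cs C)%N -> N1 \in tnodes s -> N2 \in tnodes s ->
  N1 :&: N2 = set0 -> C \subset N1 :|: N2 ->
  (ntargets Cs (C :&: N1) + ntargets Cs (C :&: N2) <= ntargets Cs C)%N.
Proof.
move=> Ct N1t N2t N1N2 CN.
have inside D M M' : D \in Cs -> M \in tnodes s -> M :&: M' = set0 ->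
    D :&: (C :&: M) != set0 -> D :&: (C :&: M') != set0 -> M \subset D.
  move=> DCs Mt MM' /setI_neq0P[x xD /setIP[_ xM]] /setI_neq0P[y yD /setIP[_ yM']].
  case: (tnode_laminar Ssym Cspart Cstab Htree Mt DCs) => [//|DM|MD0].
    suff : y \in M :&: M' by rewrite MM' inE.
    by rewrite inE (subsetP DM) // yM'.
  suff : x \in M :&: D by rewrite MD0 inE.
  by rewrite inE xM xD.
rewrite /ntargets -cardsUI.
have -> : [set D in Cs | D :&: (C :&: N1) != set0] :&:
          [set D in Cs | D :&: (C :&: N2) != set0] = set0.
  apply/setP => D; rewrite !inE; apply/negP => /andP[/andP[DCs D1] /andP[_ D2]].
  move: Ct; rewrite ltnNge pure_ntargets //; exists D => //.
  by rewrite (subset_trans CN) // subUset (inside D N1 N2) // (inside D N2 N1) // setIC.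
rewrite cards0 addn0; apply/subset_leq_card/subsetP => D; rewrite !inE.
by case/orP => /andP[-> /setI_neq0P[x xD /setIP[xC _]]]; apply/setI_neq0P; exists x.
Qed.

Lemma split_decreases st st' C : consistent Cs st -> allowed eta Cs st (Defs.Split C) ->
  step s eta st (Defs.Split C) st' ->
  consistent Cs st' /\ potential Cs eta st' <= potential Cs eta st - 1.
Proof.
case: st => P Pu [P0 Ppure] /= [CP Ct] [N [N1 [N2 [Nt CN deepest [N12s N12] ->]]]].
have {}Ct : (1 < ntargets Cs C)%N := Ct.
have [a0 b0] := deepest_split_meets Nt CN deepest N12s N12.
have [N1t N2t _ _ N1N2] := tree_pair Htree N12s.
have CPu : C \notin Pu.
  by apply: contraTN Ct => /Ppure Cpure; rewrite -leqNgt pure_ntargets.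
split=> /=.
  split=> [|X]; last by rewrite !inE => /andP[_ /andP[_ /Ppure]].
  by rewrite !inE !negb_or !negb_and P0 orbT /= !(eq_sym set0) a0 b0.
have -> : potential Cs eta (P, Pu) =
    \sum_(X in P :\ C) cost Cs eta (P, Pu) X + cost Cs eta (P, Pu) C.
  by rewrite /potential (big_setD1 C CP) addrC.
have relabel X : X \in P :\ C :\: [set C :&: N1; C :&: N2] -> X \in Pu ->
    X \in (Pu :\ C) :\: [set C :&: N1; C :&: N2].
  by rewrite !inE => /andP[-> /andP[-> _]] ->.
apply: le_trans (potential_le_replace Cs eta_gt eta_lt (st := (P, Pu)) (st' := (_, _))
  (subxx _) relabel) _.
rewrite -addrA lerD2l; apply: le_trans (sum_set2_le (cost_ge0 _ eta_gt eta_lt _) _ _) _.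
have CN12 : C \subset N1 :|: N2 by rewrite N12.
apply: split_cost; rewrite ?ntargets_gt0 //.
exact: ntargets_split Ct N1t N2t N1N2 CN12.
Qed.

Definition merge_fit st Ci Cj N :=
  (eta_of eta st Ci * #|Ci|%:R <= #|N :&: Ci|%:R) /\
  (eta_of eta st Cj * #|Cj|%:R <= #|N :&: Cj|%:R).

Lemma target_fit st C Cl : consistent Cs st -> C \in st.1 -> Cl \in Cs ->
  eta * #|C|%:R <= #|C :&: Cl|%:R -> eta_of eta st C * #|C|%:R <= #|Cl :&: C|%:R.
Proof.
move=> [P0 Ppure] CP ClCs CCl; rewrite /eta_of setIC; case: ifPn => // CPu.
have [D DCs CD] := Ppure C CPu.
have C0 : C != set0 by apply: contraNneq P0 => <-.
have CCl0 : Cl :&: C != set0 by apply: fraction_meets (eta_gt0 eta_gt) C0 _; rewrite setIC.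
have <- : D = Cl.
  apply: (trivIset_meet_eq (partition_trivIset Cspart)) => //.
  by move: CCl0; rewrite setIC; apply: contraNneq => DCl0; rewrite -subset0 -DCl0 setSI.
by rewrite mul1r ler_nat (setIidPl CD).
Qed.

Lemma merge_node_sub_target st Ci Cj N Cl : consistent Cs st ->
  Ci \in st.1 -> Cj \in st.1 -> Cl \in Cs ->
  eta * #|Ci|%:R <= #|Ci :&: Cl|%:R -> eta * #|Cj|%:R <= #|Cj :&: Cl|%:R ->
  N \in tnodes s -> merge_fit st Ci Cj N ->
  (forall M, M \in tnodes s -> merge_fit st Ci Cj M -> (tdepth s M <= tdepth s N)%N) ->
  N \subset Cl.
Proof.
move=> cst CiP CjP ClCs CiCl CjCl Nt [NCi NCj] deepest.
have Ci0 : Ci != set0 by case: cst => P0 _; apply: contraNneq P0 => <-.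
have NCl : N :&: Cl != set0.
  apply: (majorities_meet eta_gt Ci0); last by rewrite setIC.
  exact: le_trans (ler_wpM2r (ler0n _ _) (eta_of_ge eta_lt st Ci)) NCi.
have [//|ClN|NCl0] := tnode_laminar Ssym Cspart Cstab Htree Nt ClCs; last first.
  by rewrite NCl0 eqxx in NCl.
have [->//|neq] := eqVneq Cl N.
suff /(deepest Cl (target_tnode Ssym Cspart Cstab Htree ClCs)) : merge_fit st Ci Cj Cl.
  by rewrite leqNgt (tdepth_proper Nt) // properEneq neq.
by split; apply: target_fit.
Qed.

Definition merge_state st Ci Cj N : state T :=
  let newC := N :&: (Ci :|: Cj) in
  let P' := (st.1 :\ Ci :\ Cj) :|: ([set Ci :\: N; Cj :\: N] :\ set0) :|: [set newC] in
  (P', P' :&: ((st.2 :\ Ci :\ Cj) :|: (if Ci \in st.2 then [set Ci :\: N] else set0)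
              :|: (if Cj \in st.2 then [set Cj :\: N] else set0) :|: [set newC])).

Lemma merge_state_consistent st Ci Cj N : consistent Cs st -> N :&: Ci != set0 ->
  pure Cs (N :&: (Ci :|: Cj)) -> consistent Cs (merge_state st Ci Cj N).
Proof.
case: st => P Pu [/= P0 Ppure] NCi newC_pure; split=> /= [|X].
  rewrite !inE (negbTE P0) eqxx !andbF /= eq_sym; apply: contraNN NCi => /eqP N0.
  by rewrite -subset0 -N0 setIS ?subsetUl.
rewrite in_setI => /andP[_]; rewrite !in_setU => /orP[/orP[/orP[XA|XI]|XJ]|/set1P-> //].
- by move: XA; rewrite !inE => /and3P[_ _ /Ppure].
- case: ifP XI => [CiPu /set1P->|_]; last by rewrite inE.
  exact: pureS (subsetDl _ _) (Ppure _ CiPu).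
- case: ifP XJ => [CjPu /set1P->|_]; last by rewrite inE.
  exact: pureS (subsetDl _ _) (Ppure _ CjPu).
Qed.

Lemma merge_state_potential st Ci Cj N : Ci \in st.1 -> Cj \in st.1 -> Ci != Cj ->
  merge_fit st Ci Cj N -> pure Cs (N :&: (Ci :|: Cj)) ->
  potential Cs eta (merge_state st Ci Cj N) <= potential Cs eta st - 1.
Proof.
case: st => P Pu /= CiP CjP Cij [NCi NCj] newC_pure; rewrite /merge_state /=.
set newC := N :&: (Ci :|: Cj); set B := [set Ci :\: N; Cj :\: N] :\ set0.
set P1 := P :\ Ci :\ Cj :|: B :|: [set newC]; set Pu1 := P1 :&: _.
have -> : potential Cs eta (P, Pu) = \sum_(X in P :\: [set Ci; Cj]) cost Cs eta (P, Pu) X +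
    (cost Cs eta (P, Pu) Ci + cost Cs eta (P, Pu) Cj).
  rewrite /potential (big_setD1 Ci CiP) (big_setD1 Cj) /=; last by rewrite !inE CjP andbT eq_sym.
  by rewrite setDDl addrA addrC.
have sub : P1 \subset P :\: [set Ci; Cj] :|: (B :|: [set newC]) by rewrite -setDDl setUA.
have relabel X : X \in P :\: [set Ci; Cj] :\: (B :|: [set newC]) -> X \in Pu -> X \in Pu1.
  rewrite in_setD -setDDl => /andP[_ XA] XPu; rewrite /Pu1 in_setI /P1 !in_setU XA /=.
  by move: XA; rewrite !inE XPu => /and3P[-> -> _].
apply: le_trans (potential_le_replace Cs eta_gt eta_lt (st := (P, Pu)) (st' := (P1, Pu1))
  sub relabel) _.
rewrite -addrA lerD2l (le_trans (sum_setU_le (cost_ge0 Cs eta_gt eta_lt _) _ _)) //.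
have Bcost := sum_set2D1_le (cost_ge0 Cs eta_gt eta_lt (P1, Pu1)) (Ci :\: N) (Cj :\: N) set0.
have Cicost := merge_remainder_cost Cs eta_gt eta_lt (P1, Pu1) NCi.
have Cjcost := merge_remainder_cost Cs eta_gt eta_lt (P1, Pu1) NCj.
have newC_cost : cost Cs eta (P1, Pu1) newC <= 1.
  rewrite /cost ifT; last by rewrite /Pu1 in_setI !in_setU !in_set1 eqxx !orbT.
  have := pure_ntargets Cspart newC_pure; case: (ntargets Cs newC) => [|[|//]] _;
    by rewrite mulr0n mulr0 addr0.
rewrite big_set1; apply: le_trans (lerD (le_trans Bcost (lerD Cicost Cjcost)) newC_cost) _.
lra.
Qed.

Lemma merge_decreases st st' Ci Cj : consistent Cs st ->
  allowed eta Cs st (Defs.Merge Ci Cj) -> step s eta st (Defs.Merge Ci Cj) st' ->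
  consistent Cs st' /\ potential Cs eta st' <= potential Cs eta st - 1.
Proof.
move=> cst [CiP CjP Cij [Cl ClCs [CiCl CjCl]]] [N [Nt fitN deepest st'E]].
have NCl := merge_node_sub_target cst CiP CjP ClCs CiCl CjCl Nt fitN deepest.
have newC_pure : pure Cs (N :&: (Ci :|: Cj)) by exists Cl; rewrite // subIset ?NCl.
have Ci0 : Ci != set0 by case: cst => P0 _; apply: contraNneq P0 => <-.
have NCi := fraction_meets (eta_of_gt0 eta_gt eta_lt _ _) Ci0 fitN.1.
rewrite (st'E : st' = merge_state st Ci Cj N); split; first exact: merge_state_consistent.
exact: merge_state_potential.
Qed.

Lemma step_decreases st st' r : consistent Cs st -> allowed eta Cs st r -> step s eta st r st' ->
  consistent Cs st' /\ potential Cs eta st' <= potential Cs eta st - 1.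
Proof. by case: r => [C|Ci Cj]; [apply: split_decreases|apply: merge_decreases]. Qed.

Lemma run_length_le_potential rs st : consistent Cs st -> valid_run s eta Cs st rs ->
  (size rs)%:R <= potential Cs eta st.
Proof.
elim: rs st => [|[r st'] rs IH] st cst; first by rewrite sumr_ge0 // => C _; apply: cost_ge0.
case=> _ allowed_r step_r run_rs; have [cst' dec] := step_decreases cst allowed_r step_r.
by rewrite -natr1; have := IH st' cst' run_rs; lra.
Qed.

End EditRequests.

Lemma initial_potential_le (R : realType) (T : finType) (Cs : {set {set T}}) (eta : R)
    (P0 : {set {set T}}) : clustering Cs -> 1 / 2 < eta -> eta < 1 -> clustering P0 ->
  potential Cs eta (P0, set0) <= 3 * (1 + log_size T eta) * (total_impurity Cs P0)%:R.
Proof.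
move=> Cspart eta_gt eta_lt P0c; rewrite /potential natr_sum mulr_sumr; apply: ler_sum => X XP.
have t_gt0 := ntargets_gt0 Cspart (partition_neq0 P0c XP).
have L_ge0 : 0 <= log_size T eta by apply: log_eta_nat_ge0.
rewrite /cost inE /impurity natrB ?natrM; last by lia.
rewrite -subn1 natrB // /target_weight.
have size_le := size_cost_le eta_gt eta_lt X.
have t_ge1 : 0 <= (ntargets Cs X)%:R - 1 :> R by rewrite subr_ge0 ler1n.
by have := mulr_ge0 L_ge0 t_ge1; lra.
Qed.

Theorem corollary14 :
  exists c : nat,
  forall (R : realType) (T : finType) (S : T -> T -> R)
         (Cs : {set {set T}}) (eta : R) (gamma : {set {set T}} -> nat)
         (P0 : {set {set T}}) (s : seq ({set T} * {set T}))
         (rs : seq (request T * state T)),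
    (forall x y, S x y = S y x) ->
    clustering Cs -> stable S Cs ->
    1 / 2 < eta -> eta < 1 ->
    natural_error Cs gamma ->
    clustering P0 ->
    avg_linkage_tree S s ->
    valid_run s eta Cs (P0, set0) rs ->
    (size rs)%:R <= c%:R * (gamma P0 + #|Cs|)%:R
                    * (1 + ln (#|T|%:R : R) / ln (1 / (1 - eta))).
Proof.
exists 3 => R T S Cs eta gamma P0 s rs Ssym Cspart Cstab eta_gt eta_lt gamma_nat P0c tree run.
have consistent0 : consistent Cs (P0, set0) by split=> [|C]; rewrite ?inE ?(partition0 P0c).
have impurity_le : (total_impurity Cs P0)%:R <= (gamma P0 + #|Cs|)%:R :> R.
  by rewrite ler_nat total_impurity_le_error.
have L_ge0 : 0 <= 1 + log_size T eta by rewrite addr_ge0 ?log_eta_nat_ge0.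
apply: le_trans (run_length_le_potential Ssym Cspart Cstab tree eta_gt eta_lt consistent0 run) _.
apply: le_trans (initial_potential_le Cspart eta_gt eta_lt P0c) _.
by rewrite mulrAC ler_wpM2r // ler_wpM2l.
Qed.
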